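(* In the transactional panorama model described in the context, for any view graph, any (sequence of) write transactions in any state of computation, and any sequence of read transactions, it is always possible to answer the read transactions so that any chosen two of the three properties monotonicity, visibility, and consistency-minimal hold.
   Context: A view graph is a directed acyclic graph on a fixed set $N$ of nodes (source data and views); there is an edge $n_j \to n_i$ if view $n_i$ takes $n_j$ as input, and the dependents of a node are the nodes reachable from it. The view graph is multi-versioned. Write transactions $w^{t_1},\dots,w^{t_n}$ (timestamps $t_1<\dots<t_n$, starting from an initial version $G^{t_0}$) each modify some source nodes and must recompute their dependents; they are processed one at a time in timestamp order. Write transaction $w^{t_i}$ creates version $G^{t_i}=(E,N,V^{t_i})$, where for each node $n_k$ the set $V^{t_i}$ contains: the result $v_k^{t_i}$ if $w^{t_i}$ updates $n_k$ and has already computed it; a placeholder $UC_k^{t_i}$ (''under computation'') if $w^{t_i}$ updates $n_k$ but has not yet computed it; or the result of $n_k$ from the previous version if $w^{t_i}$ does not update $n_k$. A committed version contains no UCs. The timestamp of a returned state is the timestamp of the version it belongs to. Read transactions $r^{s_1},\dots,r^{s_m}$ ($s_1<\dots<s_m$) each read the set of views in the user's current viewport (a subset of $N$, which may change between reads) and return immediately, without waiting, a set $H^{s_i}$ containing one state (a view result or a UC) per view read. Monotonicity: for any view $n_k$ read by two transactions $r^{s_i}, r^{s_j}$ with $s_i<s_j$, returning states with timestamps $t_p$ and $t_q$, we have $t_p \le t_q$. Visibility: no $H^{s_i}$ contains a UC. Consistency: for each $r^{s_i}$ there is a version $G^{t_j}=(E,N,V^{t_j})$ with $t_j\le s_i$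 and $H^{s_i}\subseteq V^{t_j}$. Consistency-minimal: consistency holds and each read transaction returns the states (restricted to its views) of the most recent version of the view graph among those that minimize the number of UCs returned for that transaction (the minimization being over the versions permitted by the other properties that are required). *)

From mathcomp Require Import all_boot.
Set Implicit Arguments. Unset Strict Implicit. Unset Printing Implicit Defensive.

(* (edge x -> y means view y takes x as input).                       *)

Definition acyclic (N : finType) (E : rel N) : Prop :=
  forall x y, E x y -> ~~ connect E y x.

Definition source (N : finType) (E : rel N) (x : N) : bool :=
  [forall y, ~~ E y x].

(* Write transaction number j (1 <= j <= n, timestamp t j) modifies the
   source nodes S j; it updates these and all their dependents, i.e. all
   nodes reachable from S j. *)
Definition updated (N : finType) (E : rel N) (S : nat -> {set N}) (j : nat)
  : {set N} := [set y | [exists x in S j, connect E x y]].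

(* States returned by reads: the result of node k computed by the write of
   index j (index 0 = initial version G^{t_0}), or a UC placeholder of node
   k for write j. *)
Inductive state (N : Type) :=
  | Val of N & nat
  | UC of N & nat.

Definition is_UC (N : Type) (x : state N) : bool :=
  if x is UC _ _ then true else false.

(* [prog i j k] : at the moment of the i-th read, write transaction j has
   already computed node k.  [entry U prog i j k] is the entry of node k in
   version G^{t_j} at the moment of the i-th read (the set V^{t_j}). *)
Fixpoint entry (N : finType) (U : nat -> {set N} ) (prog : nat -> nat -> N -> bool)
  (i j : nat) (k : N) {struct j} : state N :=
  match j with
  | 0 => Val k 0
  | j'.+1 => if k \in U j then (if prog i j k then Val k j else UC k j)
             else entry U prog i j' k
  end.

(* Answers to read transactions.  [ans i k] is the index j of the      *)
(* version whose state for view k is returned by the i-th read; the    *)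
(* returned state is [entry U prog i (ans i k) k] and its timestamp is *)
(* t (ans i k).                                                        *)

Section Props.
Variables (N : finType) (U : nat -> {set N}) (prog : nat -> nat -> N -> bool)
  (n : nat) (t : nat -> nat) (m : nat) (s : nat -> nat) (vp : nat -> {set N})
  (ans : nat -> N -> nat).

(* the returned states come from versions existing at the read time *)
Definition well_formed : Prop :=
  forall i k, i < m -> k \in vp i -> ans i k <= n /\ t (ans i k) <= s i.

Definition monotonicity : Prop :=
  forall i i' k, i < i' -> i' < m -> k \in vp i -> k \in vp i' ->
    t (ans i k) <= t (ans i' k).

Definition visibility : Prop :=
  forall i k, i < m -> k \in vp i -> ~~ is_UC (entry U prog i (ans i k) k).

Definition consistency : Prop :=
  forall i, i < m -> exists j, [/\ j <= n, t j <= s i &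
    forall k, k \in vp i -> entry U prog i (ans i k) k = entry U prog i j k].

Definition nUC (i j : nat) : nat :=
  #|[set k in vp i | is_UC (entry U prog i j k)]|.

(* versions that read i may return given the other required properties
   (monotonicity w.r.t. the previous reads if [reqM], visibility if [reqV]) *)
Definition permitted (reqM reqV : bool) (i j : nat) : Prop :=
  [/\ j <= n, t j <= s i,
      reqM -> forall i' k, i' < i -> k \in vp i' -> k \in vp i ->
                t (ans i' k) <= t j
    & reqV -> forall k, k \in vp i -> ~~ is_UC (entry U prog i j k)].

Definition consistency_minimal (reqM reqV : bool) : Prop :=
  forall i, i < m -> exists js, [/\ permitted reqM reqV i js,
     forall k, k \in vp i -> ans i k = js
   & forall j, permitted reqM reqV i j ->
       nUC i js <= nUC i j /\ (nUC i j = nUC i js -> j <= js)].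

End Props.

(** Answer each read with one version of the whole view graph.  The initial
    version is committed and older than every read, so returning it
    everywhere is monotone and visible.  For the two combinations with
    consistency-minimality, read [i] returns the most recent UC-minimising
    version among those permitted by the earlier answers, which is possible
    as soon as some version is permitted: for visibility the initial version
    is, and for monotonicity the most recent earlier answer is.  Only the
    order of the read timestamps and the initial version preceding the first
    read matter. *)

From Stdlib Require Import ClassicalEpsilon.
From mathcomp Require Import all_boot.

Lemma ex_last_argmin (P : nat -> Prop) (f : nat -> nat) (n : nat) :
  (exists j, P j) -> (forall j, P j -> j <= n) ->
  exists js, P js /\ forall j, P j -> f js <= f j /\ (f j = f js -> j <= js).
Proof.
move=> [j0 Pj0] P_le_n.
pose p j := if excluded_middle_informative (P j) then true else false.
have pP j : reflect (P j) (p j).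
  by rewrite /p; case: excluded_middle_informative => ?; constructor.
pose attained v := [exists j : 'I_n.+1, p j && (f j == v)].
have attainedP j : P j -> attained (f j).
  move=> Pj; have j_lt : j < n.+1 by rewrite ltnS P_le_n.
  by apply/existsP; exists (Ordinal j_lt); rewrite /= eqxx andbT; apply/pP.
have [v /existsP [j1 /andP [p_j1 /eqP f_j1]] v_min] :=
  ex_minnP (ex_intro attained _ (attainedP j0 Pj0)).
have ex_v : exists j, p j && (f j == v) by exists j1; rewrite p_j1 f_j1 eqxx.
have ub_v j : p j && (f j == v) -> j <= n by case/andP => /pP /P_le_n.
have [js /andP [/pP Pjs /eqP f_js] js_max] := ex_maxnP ex_v ub_v.
exists js; split=> // j Pj; split; first by rewrite f_js; exact: v_min (attainedP j Pj).
by move=> f_j; apply: js_max; rewrite f_j f_js eqxx andbT; apply/pP.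
Qed.

Lemma ex_argmax_prefix (f : nat -> nat) (M : nat) :
  0 < M -> exists2 i0, i0 < M & forall i, i < M -> f i <= f i0.
Proof.
case: M => // M _.
have [i0 max_i0] : {i0 : 'I_M.+1 | \max_(i < M.+1) f i = f i0}.
  by apply: eq_bigmax; rewrite card_ord.
exists i0 => // i i_lt; rewrite -max_i0.
exact: (leq_bigmax (F := fun i : 'I_M.+1 => f i) (Ordinal i_lt)).
Qed.

Lemma homo_leq_prefix (f : nat -> nat) (m : nat) :
  (forall i, i.+1 < m -> f i <= f i.+1) -> forall i i', i <= i' < m -> f i <= f i'.
Proof.
move=> f_step i i' /andP [le_ii' lt_i'm].
apply: (@homo_leq_in _ [pred j | j < m] f leq leqnn leq_trans) => //=.
- by move=> x y _ y_lt z /andP [_ z_lt]; exact: ltn_trans z_lt y_lt.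
- by move=> x _ /f_step.
- exact: leq_ltn_trans le_ii' lt_i'm.
Qed.

Section VersionAnswers.
Set Implicit Arguments.
Unset Strict Implicit.

Variables (N : finType) (U : nat -> {set N}) (prog : nat -> nat -> N -> bool)
  (n : nat) (t : nat -> nat) (m : nat) (s : nat -> nat) (vp : nat -> {set N}).

Definition version_answers (a : nat -> nat) : nat -> N -> nat := fun i _ => a i.

Local Notation permitted_by a := (permitted U prog n t s vp (version_answers a)).
Local Notation nUC := (nUC U prog vp).

Definition minimal_version (reqM reqV : bool) (a : nat -> nat) (i : nat) : Prop :=
  permitted_by a reqM reqV i (a i) /\
  forall j, permitted_by a reqM reqV i j ->
    nUC i (a i) <= nUC i j /\ (nUC i j = nUC i (a i) -> j <= a i).

Lemma permitted_eq_prefix reqM reqV (a a' : nat -> nat) i j :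
  (forall i', i' < i -> a i' = a' i') ->
  permitted_by a reqM reqV i j -> permitted_by a' reqM reqV i j.
Proof.
move=> eq_a [j_le_n tj_le_si mono vis]; split=> // reqM_ i' k i'_lt k_i' k_i.
by rewrite /version_answers -eq_a //; exact: (mono reqM_ i' k).
Qed.

Lemma minimal_version_eq_prefix reqM reqV (a a' : nat -> nat) i :
  (forall i', i' <= i -> a i' = a' i') ->
  minimal_version reqM reqV a i -> minimal_version reqM reqV a' i.
Proof.
move=> eq_a [perm_ai ai_min].
have eq_lt i' : i' < i -> a i' = a' i' by move/ltnW; exact: eq_a.
have eq_lt' i' : i' < i -> a' i' = a i' by move/eq_lt.
rewrite /minimal_version -eq_a //; split; first exact: permitted_eq_prefix perm_ai.
by move=> j /(permitted_eq_prefix eq_lt'); exact: ai_min.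
Qed.

Lemma ex_minimal_versions reqM reqV :
  (forall a M, M < m -> (forall i, i < M -> minimal_version reqM reqV a i) ->
     exists j, permitted_by a reqM reqV M j) ->
  exists a, forall i, i < m -> minimal_version reqM reqV a i.
Proof.
move=> ex_permitted.
suff: forall M, M <= m -> exists a, forall i, i < M -> minimal_version reqM reqV a i.
  by apply.
elim=> [|M IH] M_lt; first by exists (fun=> 0).
have [a a_min] := IH (ltnW M_lt).
have [js [perm_js js_min]] := ex_last_argmin _ (nUC M) n
  (ex_permitted a M M_lt a_min) (fun j '(And4 j_le_n _ _ _) => j_le_n).
pose a' i := if i < M then a i else js.
have eq_a i : i < M -> a i = a' i by rewrite /a' => ->.
have a'_M : a' M = js by rewrite /a' ltnn.
exists a' => i; rewrite ltnS leq_eqVlt => /orP [/eqP ->|i_lt].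
  rewrite /minimal_version a'_M; split; first exact: permitted_eq_prefix perm_js.
  by move=> j perm_j; apply/js_min/(permitted_eq_prefix _ perm_j) => i' /eq_a.
apply: minimal_version_eq_prefix (a_min i i_lt) => i' i'_le.
exact/eq_a/(leq_ltn_trans i'_le).
Qed.

Lemma minimal_version_bounds reqM reqV a i :
  minimal_version reqM reqV a i -> a i <= n /\ t (a i) <= s i.
Proof. by case=> [[]]. Qed.

Section Consequences.
Variables (reqM reqV : bool) (a : nat -> nat).
Hypothesis a_min : forall i, i < m -> minimal_version reqM reqV a i.

Lemma minimal_versions_well_formed : well_formed n t m s vp (version_answers a).
Proof. by move=> i k /a_min /minimal_version_bounds. Qed.

Lemma minimal_versions_consistency_minimal :
  consistency_minimal U prog n t m s vp (version_answers a) reqM reqV.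
Proof. by move=> i /a_min [perm_ai ai_min]; exists (a i). Qed.

Lemma minimal_versions_monotone :
  reqM -> monotonicity t m vp (version_answers a).
Proof. by move=> reqM_ i i' k i_lt /a_min [[_ _ mono _] _]; exact: mono. Qed.

Lemma minimal_versions_visible : reqV -> visibility U prog m vp (version_answers a).
Proof. by move=> reqV_ i k /a_min [[_ _ _ vis] _]; exact: vis. Qed.

End Consequences.

Hypothesis s_nondecr : forall i i', i <= i' < m -> s i <= s i'.
Hypothesis t0_le_s : forall i, i < m -> t 0 <= s i.

Lemma initial_version_permitted reqV a M :
  M < m -> permitted_by a false reqV M 0.
Proof. by move=> M_lt; split=> //; exact: t0_le_s. Qed.

(* Viewports change between reads, so the previous answer need not be
   permitted; the most recent of all earlier answers always is. *)
Lemma latest_version_permitted a M :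
  M < m -> (forall i, i < M -> a i <= n /\ t (a i) <= s i) ->
  exists j, permitted_by a true false M j.
Proof.
move=> M_lt a_wf.
case: (posnP M) => [M0 | M_gt0].
  by exists 0; split=> // [|_ i' k]; [exact: t0_le_s | rewrite M0 ltn0].
have [i0 i0_lt i0_max] := ex_argmax_prefix (t \o a) _ M_gt0.
have [ai0_le_n t_ai0_le] := a_wf i0 i0_lt.
exists (a i0); split=> // [|_ i' k i'_lt _ _]; last exact: i0_max.
by apply: leq_trans t_ai0_le _; apply: s_nondecr; rewrite (ltnW i0_lt).
Qed.

Lemma initial_version_answers :
  [/\ well_formed n t m s vp (version_answers (fun=> 0)),
      monotonicity t m vp (version_answers (fun=> 0))
    & visibility U prog m vp (version_answers (fun=> 0))].
Proof. by split=> // i k i_lt _; split=> //; exact: t0_le_s. Qed.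

End VersionAnswers.

Theorem theorem2p7
  (N : finType) (E : rel N) (S : nat -> {set N})
  (n : nat) (t : nat -> nat) (m : nat) (s : nat -> nat)
  (vp : nat -> {set N}) (prog : nat -> nat -> N -> bool)
  (* the view graph is a DAG; writes modify source nodes only *)
  (hE : acyclic E)
  (hS : forall j x, 1 <= j <= n -> x \in S j -> source E x)
  (* write timestamps t_0 < t_1 < ... < t_n, read timestamps s_0 < ... < s_{m-1} *)
  (ht : forall j, j < n -> t j < t j.+1)
  (hs : forall i, i.+1 < m -> s i < s i.+1)
  (* the initial version exists before any read *)
  (h0 : 0 < m -> t 0 <= s 0)
  (* computation progresses monotonically over time *)
  (hprog_mono : forall i i' j k, i <= i' -> prog i j k -> prog i' j k)
  (* a write only computes after it has arrived *)
  (hprog_arr : forall i j k, 1 <= j <= n -> prog i j k -> t j <= s i)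
  (* writes are processed one at a time in timestamp order: if write j has
     computed something, every earlier write j' is committed *)
  (hprog_seq : forall i j j' k k', 1 <= j' -> j' < j -> j <= n ->
      k \in updated E S j -> prog i j k ->
      k' \in updated E S j' -> prog i j' k') :
  let U := updated E S in
  (exists ans, [/\ well_formed n t m s vp ans,
                   monotonicity t m vp ans & visibility U prog m vp ans]) /\
  (exists ans, [/\ well_formed n t m s vp ans,
                   monotonicity t m vp ans &
                   consistency_minimal U prog n t m s vp ans true false]) /\
  (exists ans, [/\ well_formed n t m s vp ans,
                   visibility U prog m vp ans &
                   consistency_minimal U prog n t m s vp ans false true]).
Proof.
move=> U.
have s_nondecr : forall i i', i <= i' < m -> s i <= s i'.
  by apply: homo_leq_prefix => i /hs/ltnW.
have t0_le_s i : i < m -> t 0 <= s i.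
  move=> i_lt; apply: leq_trans (h0 (leq_ltn_trans (leq0n i) i_lt)) _.
  by apply: s_nondecr.
split; [|split].
- by exists (version_answers (fun=> 0)); exact: initial_version_answers.
- have [a a_min] :
      exists a, forall i, i < m -> minimal_version U prog n t s vp true false a i.
    apply: ex_minimal_versions => a M M_lt a_min.
    apply: (latest_version_permitted U prog vp s_nondecr t0_le_s M_lt) => i i_lt.
    exact: minimal_version_bounds (a_min i i_lt).
  exists (version_answers a); split.
  + exact: minimal_versions_well_formed a_min.
  + exact: minimal_versions_monotone a_min isT.
  + exact: minimal_versions_consistency_minimal a_min.
- have [a a_min] :
      exists a, forall i, i < m -> minimal_version U prog n t s vp false true a i.
    apply: ex_minimal_versions => a M M_lt _; exists 0.
    exact: (initial_version_permitted U prog n vp t0_le_s true a M_lt).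
  exists (version_answers a); split.
  + exact: minimal_versions_well_formed a_min.
  + exact: minimal_versions_visible a_min isT.
  + exact: minimal_versions_consistency_minimal a_min.
Qed.
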